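(* Let $(\Re, S, V)$ be a $V$-complete vector $S$-metric space, where $V$ is Archimedean. Let $K:\Re\to\Re$ be a continuous map and let $f:\Re\to\Re$ be a map commuting with $K$ (i.e. $fK=Kf$). Suppose: (a) $f(\Re)\subseteq K(\Re)$; (b) there is a constant $q\in[0,\tfrac13)$ such that for all $x,y\in\Re$, \[ S(fx,fx,fy)\preceq q\,U(x,x,y) \] for some \[ U(x,x,y)\in\{S(Kx,Kx,Ky),\ S(Kx,Kx,fx),\ S(Ky,Ky,fy),\ S(Kx,Kx,fy),\ S(Ky,Ky,fx)\}; \] (c) $K(\Re)$ or $f(\Re)$ is $V$-complete as a subspace of $\Re$. Then $K$ and $f$ have a unique common fixed point.
   Context: A vector lattice (Riesz space) $V$ is a real vector space with a partial order $\preceq$ compatible with the linear structure ($p_1 \preceq p_2 \Rightarrow p_1+p_3 \preceq p_2+p_3$ and $\omega p_1 \preceq \omega p_2$ for real $\omega>0$) in which every two-element set has a supremum and an infimum. $V$ is Archimedean if $\inf\{\tfrac{1}{m}v : m \in \mathbb{N}\} = 0$ for every $v \in V^+=\{v\in V: v\succeq 0\}$. For a sequence $(\mu_n)$ in $V$, $\mu_n \downarrow 0$ means $(\mu_n)$ is decreasing with $\inf_n \mu_n = 0$. A vector $S$-metric on a nonempty set $\Re$ is a map $S:\Re\times\Re\times\Re\to V$ such that for all $x,y,z,a\in\Re$: (a) $S(x,y,z)\succeq 0$; (b) $S(x,y,z)=0$ iff $x=y=z$; (c) $S(x,y,z)\preceq S(x,y,a)+S(y,y,a)+S(z,z,a)$.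 The triple $(\Re,S,V)$ is a vector $S$-metric space. A sequence $(x_n)$ in $\Re$ $V$-converges to $x\in\Re$ (written $x_n \xrightarrow{S,V} x$) if there is a sequence $(\mu_n)$ in $V$ with $\mu_n\downarrow 0$ and $S(x_n,x_n,x)\preceq \mu_n$ for all $n$. It is $V$-Cauchy if there is $(\mu_n)$ in $V$ with $\mu_n\downarrow 0$ and $S(x_n,x_n,x_{n+q})\preceq\mu_n$ for all $n$ and all $q$. The space (or a subset of it) is $V$-complete if every $V$-Cauchy sequence in it $V$-converges to a limit in it. A map $K:\Re\to\Re$ is continuous if $x_n\xrightarrow{S,V}x$ implies $Kx_n\xrightarrow{S,V}Kx$. *)

From mathcomp Require Import all_boot all_order all_algebra.
From mathcomp Require Import reals.
Set Implicit Arguments. Unset Strict Implicit. Unset Printing Implicit Defensive.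
Import Order.TTheory GRing.Theory Num.Theory.
Local Open Scope ring_scope.

Section VL.
Variables (R : realType) (V : lmodType R) (le : V -> V -> Prop).

Definition is_inf (A : V -> Prop) (a : V) : Prop :=
  (forall w, A w -> le a w) /\ (forall b, (forall w, A w -> le b w) -> le b a).
Definition is_sup (A : V -> Prop) (a : V) : Prop :=
  (forall w, A w -> le w a) /\ (forall b, (forall w, A w -> le w b) -> le a b).

Record vector_lattice : Prop := {
  vl_refl : forall p, le p p;
  vl_antisym : forall p1 p2, le p1 p2 -> le p2 p1 -> p1 = p2;
  vl_trans : forall p1 p2 p3, le p1 p2 -> le p2 p3 -> le p1 p3;
  vl_add : forall p1 p2 p3, le p1 p2 -> le (p1 + p3) (p2 + p3);
  vl_scale : forall (w : R) p1 p2, 0 < w -> le p1 p2 -> le (w *: p1) (w *: p2);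
  vl_sup : forall x y, exists s, is_sup (fun w => w = x \/ w = y) s;
  vl_inf : forall x y, exists i, is_inf (fun w => w = x \/ w = y) i }.

Definition archimedean_vl : Prop :=
  forall v, le 0 v ->
    is_inf (fun w => exists m : nat, (0 < m)%N /\ w = (m%:R)^-1 *: v) 0.

Definition decr_to_0 (mu : nat -> V) : Prop :=
  (forall n, le (mu n.+1) (mu n)) /\ is_inf (fun w => exists n, w = mu n) 0.

Variable X : Type.

Definition vector_S_metric (S : X -> X -> X -> V) : Prop :=
  (forall x y z, le 0 (S x y z)) /\
  (forall x y z, S x y z = 0 <-> (x = y /\ y = z)) /\
  (forall x y z a, le (S x y z) (S x y a + S y y a + S z z a)).

Variable S : X -> X -> X -> V.

Definition V_converges (xs : nat -> X) (x : X) : Prop :=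
  exists mu : nat -> V, decr_to_0 mu /\ forall n, le (S (xs n) (xs n) x) (mu n).

Definition V_Cauchy (xs : nat -> X) : Prop :=
  exists mu : nat -> V, decr_to_0 mu /\
    forall n q, le (S (xs n) (xs n) (xs (n + q)%N)) (mu n).

Definition V_complete (A : X -> Prop) : Prop :=
  forall xs : nat -> X, (forall n, A (xs n)) -> V_Cauchy xs ->
    exists x, A x /\ V_converges xs x.

Definition V_continuous (K : X -> X) : Prop :=
  forall xs x, V_converges xs x -> V_converges (fun n => K (xs n)) (K x).

End VL.

From mathcomp Require Import all_boot all_order all_algebra.
From mathcomp Require Import reals.
From mathcomp Require Import ring lra.
From Stdlib Require Import ClassicalEpsilon.
Import Order.TTheory GRing.Theory Num.Theory.
Local Open Scope ring_scope.
Set Implicit Arguments.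
Unset Strict Implicit.

(* Starting from any x0, the inclusion f(X) ⊆ K(X) yields a Jungck sequence
   (x_n) with f x_n = K x_(n+1).  The contraction condition with q < 1/3 makes
   the gaps d_n = S(y_n, y_n, y_(n+1)) of y_n = f x_n decrease geometrically
   with ratio h = 2q/(1-q) < 1; in an Archimedean ordered vector space this
   makes (y_n) V-Cauchy, hence convergent to some z.  Continuity of K and the
   contraction condition force f z = K z, commutation makes w = K z another
   coincidence point, and coincidence values are unique, so w is the unique
   common fixed point.  Completeness of the whole space is all that is used. *)

Section OrderedVectorSpace.
Variables (R : realType) (V : lmodType R) (le : V -> V -> Prop).
Hypothesis HV : vector_lattice le.
Local Notation "a ≼ b" := (le a b) (at level 70).

Lemma leD a b c d : a ≼ b -> c ≼ d -> a + c ≼ b + d.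
Proof.
move=> hab hcd; apply: (vl_trans HV (vl_add HV c hab)).
by rewrite ![b + _]addrC; apply: vl_add.
Qed.

Lemma addv_ge0 a b : 0 ≼ a -> 0 ≼ b -> 0 ≼ a + b.
Proof. by move=> ha hb; rewrite -[0]addr0; apply: leD. Qed.

Lemma le_addl a b c : 0 ≼ b -> a ≼ c -> a ≼ b + c.
Proof. by move=> hb hac; rewrite -[a]add0r; apply: leD. Qed.

Lemma le_addr a b c : 0 ≼ b -> a ≼ c -> a ≼ c + b.
Proof. by move=> hb hac; rewrite addrC; apply: le_addl. Qed.

Lemma scalev_le (w : R) a b : 0 <= w -> a ≼ b -> w *: a ≼ w *: b.
Proof.
rewrite le0r => /orP[/eqP->|w0] hab; last exact: vl_scale.
by rewrite !scale0r; apply: vl_refl.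
Qed.

Lemma scalev_ge0 (w : R) a : 0 <= w -> 0 ≼ a -> 0 ≼ w *: a.
Proof. by move=> w0 ha; rewrite -(scaler0 _ w); apply: scalev_le. Qed.

Lemma scalev_lel (s t : R) v : s <= t -> 0 ≼ v -> s *: v ≼ t *: v.
Proof.
move=> st v0; have st' : 0 <= t - s by lra.
have := vl_add HV (s *: v) (scalev_ge0 st' v0).
by rewrite add0r -scalerDl subrK.
Qed.

Lemma le_absorb (s : R) a v : s < 1 -> a ≼ s *: a + v -> a ≼ (1 - s)^-1 *: v.
Proof.
move=> s1 h; have s1_gt0 : 0 < 1 - s by rewrite subr_gt0.
have h1 : (1 - s) *: a ≼ v.
  by have := vl_add HV (- (s *: a)) h; rewrite addrAC subrr add0r scalerBl scale1r.
have inv_ge0 : 0 <= (1 - s)^-1 by rewrite invr_ge0 ltW.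
have := scalev_le inv_ge0 h1.
by rewrite scalerA mulVf ?gt_eqF // scale1r.
Qed.

Lemma contracted_eq0 (q : R) b : q < 1 -> 0 ≼ b -> b ≼ q *: b -> b = 0.
Proof.
move=> q1 b0 hb; apply: (vl_antisym HV) => //.
by have := @le_absorb q b 0 q1; rewrite addr0 scaler0; apply.
Qed.

Lemma geometric_decay (h : R) (a : nat -> V) :
  0 <= h -> (forall n, a n.+1 ≼ h *: a n) -> forall n, a n ≼ h ^+ n *: a 0%N.
Proof.
move=> h0 step; elim=> [|n IH]; first by rewrite expr0 scale1r; apply: vl_refl.
by apply: (vl_trans HV (step n)); rewrite exprS -scalerA; apply: scalev_le.
Qed.

Lemma below_decr_to_0 (k : R) (mu : nat -> V) b :
  decr_to_0 le mu -> 0 < k -> (forall n, b ≼ k *: mu n) -> b ≼ 0.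
Proof.
move=> [_ [_ inf0]] k0 hb.
have kb : k^-1 *: b ≼ 0.
  apply: inf0 => _ [n ->]; have := scalev_le (w := k^-1) _ (hb n).
  by rewrite scalerA mulVf ?gt_eqF // scale1r invr_ge0; apply; apply: ltW.
by have := scalev_le (ltW k0) kb; rewrite scaler0 scalerA mulfV ?gt_eqF // scale1r.
Qed.

End OrderedVectorSpace.

Lemma geometric_small (R : realType) (h c e : R) :
  0 <= h -> h < 1 -> 0 <= c -> 0 < e -> exists n, c * h ^+ n <= e.
Proof.
move=> h0 h1 c0 e0; have [->|hn0] := eqVneq h 0.
  by exists 1%N; rewrite expr1 mulr0 ltW.
have hp : 0 < h by rewrite lt_def hn0 h0.
pose t := h^-1 - 1; have tp : 0 < t by rewrite /t subr_gt0 invf_gt1.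
have bernoulli (n : nat) : 1 + n%:R * t <= (1 + t) ^+ n.
  elim: n => [|n IH]; first by rewrite mul0r addr0 expr0.
  rewrite exprS -natr1; have n0 : 0 <= n%:R :> R by []; nra.
pose n := Num.bound (c / (e * t)); exists n.
have hb := archi_boundP (divr_ge0 c0 (ltW (mulr_gt0 e0 tp))); rewrite -/n in hb.
have cn : c < n%:R * (e * t) by rewrite -ltr_pdivrMr // mulr_gt0.
have -> : h = (1 + t)^-1 by rewrite /t addrC subrK invrK.
rewrite exprVn ler_pdivrMr ?exprn_gt0 //; last lra.
have := bernoulli n; nra.
Qed.

Lemma geometric_decr_to_0 (R : realType) (V : lmodType R) (le : V -> V -> Prop)
    (h c : R) v :
  vector_lattice le -> archimedean_vl le -> 0 <= h -> h < 1 -> 0 <= c -> le 0 v ->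
  decr_to_0 le (fun n => (c * h ^+ n) *: v).
Proof.
move=> HV Harch h0 h1 c0 v0; split.
  move=> n; apply: scalev_lel => //.
  by have := mulr_ge0 c0 (exprn_ge0 n h0); rewrite exprS; nra.
split; first by move=> _ [n ->]; apply: scalev_ge0 => //; rewrite mulr_ge0 ?exprn_ge0.
move=> b hb; apply: (Harch v v0).2 => _ [m [m0 ->]].
have e0 : 0 < (m%:R : R)^-1 by rewrite invr_gt0 ltr0n.
have [n hn] := geometric_small h0 h1 c0 e0.
exact: (vl_trans HV (hb _ (ex_intro _ n erefl)) (scalev_lel HV hn v0)).
Qed.

Section VectorSMetric.
Variables (R : realType) (V : lmodType R) (le : V -> V -> Prop).
Variables (X : Type) (S : X -> X -> X -> V).
Hypotheses (HV : vector_lattice le) (HS : vector_S_metric le S).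
Local Notation "a ≼ b" := (le a b) (at level 70).

Lemma S_ge0 x y z : 0 ≼ S x y z.
Proof. by case: HS. Qed.

Lemma S_same x : S x x x = 0.
Proof. by case: HS => _ [h _]; apply/h. Qed.

Lemma S_eq0 x y : S x x y = 0 -> x = y.
Proof. by case: HS => _ [h _] /h []. Qed.

(* S(x,x,y) = S(y,y,x), from axiom (c) applied twice with a = x, resp. a = y. *)
Lemma S_sym x y : S x x y = S y y x.
Proof.
have [_ [_ tri]] := HS; apply: (vl_antisym HV).
  by have := tri x x y x; rewrite !S_same !add0r.
by have := tri y y x y; rewrite !S_same !add0r.
Qed.

Lemma S_tri x z a (b c : V) :
  S x x a ≼ b -> S z z a ≼ c -> S x x z ≼ b + b + c.
Proof.
have [_ [_ tri]] := HS => hb hc.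
by apply: (vl_trans HV (tri x x z a)); do 2 ?apply: leD.
Qed.

(* A sequence whose consecutive gaps decay geometrically is V-Cauchy:
   S(y_n,y_n,y_(n+m)) ≼ 2/(1-h) h^n v by the triangle inequality. *)
Lemma geometric_Cauchy (h : R) (v : V) (y : nat -> X) :
  archimedean_vl le -> 0 <= h -> h < 1 ->
  (forall n, S (y n) (y n) (y n.+1) ≼ h ^+ n *: v) -> V_Cauchy le S y.
Proof.
move=> Harch h0 h1 gap.
have v0 : 0 ≼ v by have := vl_trans HV (S_ge0 _ _ _) (gap 0%N); rewrite scale1r.
pose c := 2 * (1 - h)^-1; have c0 : 0 <= c by rewrite mulr_ge0 ?invr_ge0 //; lra.
pose mu n := (c * h ^+ n) *: v.
have mu_split n : mu n = h ^+ n *: v + h ^+ n *: v + mu n.+1.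
  rewrite /mu -!scalerDl; congr (_ *: _); rewrite /c exprS; field; lra.
exists mu; split; first exact: geometric_decr_to_0.
move=> n m; elim: m n => [|m IH] n.
  by rewrite addn0 S_same; apply: scalev_ge0 => //; rewrite mulr_ge0 ?exprn_ge0.
rewrite mu_split -addSnnS; apply: (S_tri (a := y n.+1)) => //.
by rewrite S_sym; apply: IH.
Qed.

End VectorSMetric.

Definition jungck_candidate (V X : Type) (S : X -> X -> X -> V) (K f : X -> X)
    (x y : X) (U : V) : Prop :=
  U = S (K x) (K x) (K y) \/ U = S (K x) (K x) (f x) \/
  U = S (K y) (K y) (f y) \/ U = S (K x) (K x) (f y) \/
  U = S (K y) (K y) (f x).

Lemma jungck_sequence (X : Type) (K f : X -> X) (x0 : X) :
  (forall x, exists x', f x = K x') ->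
  exists xs : nat -> X, forall n, f (xs n) = K (xs n.+1).
Proof.
move=> sub; pose g x := proj1_sig (constructive_indefinite_description _ (sub x)).
have gP x : f x = K (g x) := proj2_sig (constructive_indefinite_description _ (sub x)).
by exists (fun n => iter n g x0) => n; rewrite gP.
Qed.

Section JungckContraction.
Variables (R : realType) (V : lmodType R) (le : V -> V -> Prop).
Variables (X : Type) (S : X -> X -> X -> V) (K f : X -> X) (q : R).
Hypotheses (HV : vector_lattice le) (HS : vector_S_metric le S).
Hypotheses (q0 : 0 <= q) (q1 : q < 1).
Hypothesis contraction : forall x y, exists U,
  jungck_candidate S K f x y U /\ le (S (f x) (f x) (f y)) (q *: U).
Local Notation "a ≼ b" := (le a b) (at level 70).

Lemma contraction_bound x y (B : V) :
  (forall U, jungck_candidate S K f x y U -> U ≼ B) ->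
  S (f x) (f x) (f y) ≼ q *: B.
Proof.
move=> hB; have [U [HU Hle]] := contraction x y.
exact: (vl_trans HV Hle (scalev_le HV q0 (hB U HU))).
Qed.

(* Along a Jungck sequence the gaps shrink by the factor 2q/(1-q): every
   candidate is bounded by 2 d_n + d_(n+1), so d_(n+1) ≼ q (2 d_n + d_(n+1)). *)
Lemma jungck_step x x' x'' : f x = K x' -> f x' = K x'' ->
  S (f x') (f x') (f x'') ≼ ((1 - q)^-1 * (q + q)) *: S (f x) (f x) (f x').
Proof.
move=> fx fx'; set d0 := S (f x) _ _; set d1 := S (f x') _ _.
have d0_ge0 : 0 ≼ d0 := S_ge0 HS _ _ _.
have d1_ge0 : 0 ≼ d1 := S_ge0 HS _ _ _.
have refl_d0 : d0 ≼ d0 + d0 + d1.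
  by rewrite -addrA addrC; apply: le_addl (addv_ge0 HV _ _) (vl_refl HV _).
have bound : d1 ≼ q *: (d0 + d0 + d1).
  apply: contraction_bound => U; rewrite /jungck_candidate -fx -fx'.
  case=> [->|[->|[->|[->|->]]]] //.
  + exact: le_addl (addv_ge0 HV _ _) (vl_refl HV _).
  + apply: (S_tri HV HS (a := f x')); first exact: vl_refl.
    by rewrite (S_sym HV HS); apply: vl_refl.
  + by rewrite (S_same HS); do 2 ?apply: addv_ge0.
rewrite -scalerA; apply: le_absorb => //.
suff -> : q *: d1 + (q + q) *: d0 = q *: (d0 + d0 + d1) by [].
by rewrite !scalerDr scalerDl addrC.
Qed.

(* Points of coincidence have a unique value: f u = K u and f w = K w force
   f u = f w, since then every candidate is S(fu,fu,fw), its mirror, or 0. *)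
Lemma coincidence_value_unique u w : f u = K u -> f w = K w -> f u = f w.
Proof.
move=> fu fw; apply: (S_eq0 HS); apply: (contracted_eq0 HV q1 (S_ge0 HS _ _ _)).
apply: contraction_bound => U; rewrite /jungck_candidate -fu -fw.
case=> [->|[->|[->|[->|->]]]]; rewrite ?(S_same HS); try exact: S_ge0 HS _ _ _.
- exact: vl_refl.
- exact: vl_refl.
- by rewrite (S_sym HV HS); apply: vl_refl.
Qed.

(* If K u_n V-converges to K z along a sequence with f u_n = K u_(n+1), then z
   is a coincidence point: S(Kz,Kz,fz) ≼ q S(Kz,Kz,fz) + (2+3q) nu_n. *)
Lemma coincidence_at_limit (u : nat -> X) z :
  (forall n, f (u n) = K (u n.+1)) ->
  V_converges le S (fun n => K (u n)) (K z) -> f z = K z.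
Proof.
move=> fu [nu [nu_decr nu_conv]]; set a := S (K z) (K z) (f z).
have nu_bound n : S (K (u n)) (K (u n)) (K z) ≼ nu n := nu_conv n.
have a_ge0 : 0 ≼ a := S_ge0 HS _ _ _.
have nu_ge0 n : 0 ≼ nu n := vl_trans HV (S_ge0 HS _ _ _) (nu_bound n).
have nu_next n : S (K (u n.+1)) (K (u n.+1)) (K z) ≼ nu n.
  exact: (vl_trans HV (nu_bound n.+1) (nu_decr.1 n)).
have nu_le3 n v : v ≼ nu n -> v ≼ nu n + nu n + nu n.
  by move=> hv; apply: le_addl => //; apply: addv_ge0.
have candidates n : S (f (u n)) (f (u n)) (f z) ≼ q *: (nu n + nu n + nu n + a).
  apply: contraction_bound => U; rewrite /jungck_candidate fu.
  case=> [->|[->|[->|[->|->]]]].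
  - by apply: (le_addr HV a_ge0); apply: nu_le3; apply: nu_bound.
  - apply: (le_addr HV a_ge0).
    by apply: (S_tri HV HS (a := K z)); [apply: nu_bound|apply: nu_next].
  - by apply: (le_addl HV _ (vl_refl HV _)); do 2 ?apply: addv_ge0.
  - apply: (vl_trans HV (S_tri HV HS (a := K z) (nu_bound n) (vl_refl HV _))).
    rewrite (S_sym HV HS (f z)); apply: (leD HV _ (vl_refl HV _)).
    by apply: (le_addr HV (nu_ge0 n)); apply: vl_refl.
  - by rewrite (S_sym HV HS); apply: (le_addr HV a_ge0); apply: nu_le3; apply: nu_next.
have key n : a ≼ q *: a + (nu n + nu n + q *: (nu n + nu n + nu n)).
  have -> : q *: a + (nu n + nu n + q *: (nu n + nu n + nu n)) =
            nu n + nu n + q *: (nu n + nu n + nu n + a).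
    by rewrite [in RHS]scalerDr [in RHS]addrA [in RHS]addrC.
  apply: (S_tri HV HS (a := f (u n))).
  - by rewrite fu (S_sym HV HS); apply: nu_next.
  - by rewrite (S_sym HV HS); apply: candidates.
have k_gt0 : 0 < (1 - q)^-1 * (2 + 3 * q).
  by apply: mulr_gt0; [rewrite invr_gt0|]; move: q0 q1; lra.
have a_le0 : a ≼ 0.
  apply: (below_decr_to_0 HV nu_decr k_gt0) => n.
  rewrite -scalerA; apply: le_absorb => //.
  have -> : 2 + 3 * q = 1 + 1 + q * (1 + 1 + 1) by ring.
  by rewrite !scalerDl !scale1r -scalerA !scalerDl !scale1r; apply: key.
by apply/esym/(S_eq0 HS)/(vl_antisym HV).
Qed.

End JungckContraction.

Unset Implicit Arguments.

Theorem theorem2p2 (R : realType) (V : lmodType R) (le : V -> V -> Prop)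
  (X : Type) (S : X -> X -> X -> V) (K f : X -> X) :
  vector_lattice le -> archimedean_vl le ->
  inhabited X ->
  vector_S_metric le S ->
  V_complete le S (fun _ => True) ->
  V_continuous le S K ->
  (forall x, f (K x) = K (f x)) ->
  (forall y, (exists x, y = f x) -> exists x, y = K x) ->
  (exists q : R, 0 <= q /\ q < 3^-1 /\
     forall x y, exists U : V,
       (U = S (K x) (K x) (K y) \/ U = S (K x) (K x) (f x) \/
        U = S (K y) (K y) (f y) \/ U = S (K x) (K x) (f y) \/
        U = S (K y) (K y) (f x)) /\
       le (S (f x) (f x) (f y)) (q *: U)) ->
  (V_complete le S (fun y => exists x, y = K x) \/
   V_complete le S (fun y => exists x, y = f x)) ->
  exists x, (K x = x /\ f x = x) /\ forall z, K z = z /\ f z = z -> z = x.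
Proof.
move=> HV Harch [x0] HS Hcomp Hcont Hcomm Hsub [q [q0 [q3 Hc]]] _.
have q1 : q < 1 by apply: (lt_trans q3); rewrite invf_lt1 //; lra.
pose h := (1 - q)^-1 * (q + q).
have h0 : 0 <= h by rewrite mulr_ge0 ?invr_ge0; lra.
have h1 : h < 1 by rewrite -ltr_pdivlMl ?invr_gt0 ?invrK; lra.
have [xs fxs] : exists xs : nat -> X, forall n, f (xs n) = K (xs n.+1).
  by apply: jungck_sequence x0 _ => x; have [x' ->] := Hsub (f x) (ex_intro _ x erefl); exists x'.
pose y n := f (xs n).
have gap n : le (S (y n.+1) (y n.+1) (y n.+2)) (h *: S (y n) (y n) (y n.+1)).
  exact: jungck_step HV HS q0 q1 Hc _ _ _ (fxs n) (fxs n.+1).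
have y_Cauchy := geometric_Cauchy HV HS Harch h0 h1 (geometric_decay HV h0 gap).
have [z [_ y_to_z]] := Hcomp y (fun _ => I) y_Cauchy.
have fz : f z = K z.
  apply: (coincidence_at_limit HV HS q0 q1 Hc (u := y)) (Hcont _ _ y_to_z) => n.
  by rewrite /y -Hcomm -fxs.
pose w := K z; have fw : f w = K w by rewrite /w Hcomm fz.
have Kw : K w = w by rewrite -fw (coincidence_value_unique HV HS q0 q1 Hc fw fz).
exists w; split; first by split; rewrite ?fw.
move=> u [Ku fu]; have fuKu : f u = K u by rewrite Ku.
by rewrite -fu (coincidence_value_unique HV HS q0 q1 Hc fuKu fw) fw.
Qed.
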